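(* Let $d\in\mathbb{N}$, $c>0$ and $0<a<1$, and let $\{V, V_{i,n}: i,n\in\mathbb{N}_0\}$ be a family of i.i.d., almost surely nonnegative random variables on a probability space with measure $Q$. Then $E_Q[(\log_+V)^d]<\infty$ if and only if $$\sum_{n\in\mathbb{N}_0}a^n\sum_{i=0}^{\lfloor c\,n^{d-1}\rfloor}V_{i,n}<\infty\quad Q\text{-a.s.}$$
   Context: $\log_+x=\max(\log x,0)$; $\lfloor\cdot\rfloor$ is the integer part; the convention $0^0=1$ is used for $n=0$, $d=1$. *)

From HB Require Import structures.
From mathcomp Require Import all_boot all_order all_algebra.
From mathcomp Require Import all_classical all_reals all_analysis.
Set Implicit Arguments. Unset Strict Implicit. Unset Printing Implicit Defensive.
Import Order.TTheory GRing.Theory Num.Theory.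
Local Open Scope ring_scope.
Local Open Scope classical_set_scope.

(* log_+ x = max(log x, 0); for x <= 0 (log x = -oo or undefined) it is 0. *)
Definition logp {R : realType} (x : R) : R := if x <= 1 then 0 else ln x.

Definition mutually_independent {d : measure_display} {T : measurableType d}
  {R : realType} (Q : probability T R) {I : eqType} (X : I -> T -> R) : Prop :=
  forall (s : seq I) (B : I -> set R), uniq s ->
    (forall j, measurable (B j)) ->
    Q (\bigcap_(j in [set` s]) (X j @^-1` B j)) =
    (\prod_(j <- s) Q (X j @^-1` B j))%E.

Definition identically_distributed {d : measure_display} {T : measurableType d}
  {R : realType} (Q : probability T R) (X Y : T -> R) : Prop :=
  forall B : set R, measurable B -> Q (X @^-1` B) = Q (Y @^-1` B).

Definition fam {T : Type} {R : Type} (V : T -> R) (W : nat -> nat -> T -> R)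
  (j : option (nat * nat)) : T -> R :=
  match j with None => V | Some (i, n) => W i n end.

From HB Require Import structures.
From mathcomp Require Import all_boot all_order all_algebra.
From mathcomp Require Import all_classical all_reals all_analysis.
From mathcomp Require Import measurable_realfun.
From mathcomp Require Import zify ring lra.

Set Implicit Arguments.
Unset Strict Implicit.
Unset Printing Implicit Defensive.

Import Order.TTheory GRing.Theory Num.Theory.
Local Open Scope ring_scope.
Local Open Scope classical_set_scope.

(* Write b := -ln a, so that a^n = e^{-nb}, and m(n) := floor(c n^{d-1}) + 1.  Since
   m(0) + ... + m(N) grows like N^d, the weighted count sum_n m(n) 1[v > e^{nb}] lies between
   two affine functions of (log_+ v)^d; integrating, E[(log_+ V)^d] < oo iff
   sum_n m(n) Q(V > e^{nb}) < oo, and this for every b > 0.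
   If this holds with b/2, Borel-Cantelli shows that a.s. all W_{i,n}, i < m(n), are eventually
   at most e^{nb/2}, and the series is then dominated by a geometric one.  Conversely, if the
   series converges a.s., then a.s. W_{i,n} <= e^{nb} for all large n; for some N this event has
   a positive probability p, and by independence
   p <= prod_{n>=N} (1 - Q(V > e^{nb}))^{m(n)} <= exp(- sum_{n>=N} m(n) Q(V > e^{nb})). *)

Lemma expnS_le_expnD (M k : nat) : (M.+1 ^ k <= M ^ k + k * M.+1 ^ k.-1)%N.
Proof.
case: k => [|k]; first by rewrite !expn0.
elim: k => [|k IH]; first by rewrite !expn1 expn0; lia.
rewrite /= (expnS M.+1 k.+1) (expnS M k.+1).
have h1 : (M * M.+1 ^ k <= M.+1 ^ k.+1)%N by rewrite expnS leq_mul2r leqnSn orbT.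
have h2 : (M * M.+1 ^ k.+1 <= M * (M ^ k.+1 + k.+1 * M.+1 ^ k))%N.
  by rewrite leq_mul2l IH orbT.
nia.
Qed.

Lemma expn_le_sum_expn (d M : nat) : (0 < d)%N ->
  (M ^ d <= d * \sum_(0 <= k < M.+1) k ^ d.-1)%N.
Proof.
move=> d_gt0; elim: M => [|M IH]; first by rewrite exp0n.
rewrite big_nat_recr //= mulnDr.
have := expnS_le_expnD M d; lia.
Qed.

Section real_inequalities.
Variable R : realType.

Lemma exprn_le_1D (y : R) k d : 0 <= y -> (k <= d)%N -> y ^+ k <= 1 + y ^+ d.
Proof.
move=> y0 kd; have [y1|y1] := lerP y 1.
  by rewrite (le_trans (exprn_ile1 _ y0 y1))// lerDl exprn_ge0.
apply: (le_trans (y := y ^+ d)); last by rewrite lerDr.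
by rewrite ler_eXn2l// ltW.
Qed.

Lemma exprn_le_2XD (y u s : R) d : 0 <= u -> 0 <= s -> 0 <= y -> y <= u + s ->
  y ^+ d <= 2 ^+ d * (u ^+ d + s ^+ d).
Proof.
move=> u0 s0 y0 yus; wlog su : u s u0 s0 yus / s <= u.
  move=> W; have [|us] := leP s u; first exact: W.
  by rewrite addrC; apply: W => //; [rewrite addrC | exact: ltW].
apply: (le_trans (y := (2 * u) ^+ d)).
  by rewrite lerXn2r// ?nnegrE ?mulr_ge0//; lra.
by rewrite exprMn ler_wpM2l ?exprn_ge0// lerDl exprn_ge0.
Qed.

Lemma natrX_le_expR (g : R) k : 0 < g -> forall n : nat,
  n%:R ^+ k <= (k`!%:R / g ^+ k) * expR (n%:R * g).
Proof.
move=> g0 n; case: k => [|k].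
  by rewrite !expr0 fact0 divr1 mul1r -expR0 ler_expR mulr_ge0// ltW.
have := expR_ge1Dxn k (mulr_ge0 (ler0n _ n) (ltW g0)).
rewrite exprMn => h.
have : n%:R ^+ k.+1 * g ^+ k.+1 / k.+1`!%:R <= expR (n%:R * g).
  by rewrite (le_trans _ h)// lerDr.
rewrite ler_pdivrMr ?ltr0n ?fact_gt0// mulrAC ler_pdivlMr ?exprn_gt0//.
by rewrite [X in _ <= X]mulrC.
Qed.

Lemma sum_le_ln_prod (I : Type) (r : seq I) (p : I -> R) (m : I -> nat) (e : R) :
  0 < e -> (forall i, 0 <= p i <= 1) ->
  e <= \prod_(i <- r) (1 - p i) ^+ m i ->
  \sum_(i <- r) (m i)%:R * p i <= - ln e.
Proof.
move=> e0 p01 le_e_prod.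
have : e <= expR (- \sum_(i <- r) (m i)%:R * p i).
  apply: (le_trans le_e_prod); rewrite -sumrN expR_sum; apply: ler_prod => i _.
  have /andP[p0 p1] := p01 i.
  rewrite exprn_ge0 ?subr_ge0//= -mulrN expRM_natl lerXn2r ?nnegrE ?subr_ge0 ?expR_ge0//.
  by have := expR_ge1Dx (- p i); rewrite addrC.
by rewrite -[X in X <= _](@lnK _ e) ?posrE// ler_expR; lra.
Qed.

End real_inequalities.

Section nonnegative_series.
Variable R : realType.

Lemma nneseries_le_bound (u : nat -> R) (N : nat) (B : R) : (forall n, 0 <= u n) ->
  (forall M, \sum_(N <= n < M) u n <= B) -> (\sum_(N <= n <oo) (u n)%:E <= B%:E)%E.
Proof.
move=> u0 uB; apply: lime_le; first by apply: is_cvg_nneseries => n _ _; rewrite lee_fin.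
by apply: nearW => M; rewrite sumEFin lee_fin.
Qed.

Lemma nneseries_lty_eventually_geometric (u : nat -> R) (q K : R) (N : nat) :
  (forall n, 0 <= u n) -> 0 < q -> q < 1 -> 0 <= K ->
  (forall n, (N <= n)%N -> u n <= K * q ^+ n) ->
  (\sum_(0 <= n <oo) (u n)%:E < +oo)%E.
Proof.
move=> u0 q0 q1 K0 uK.
pose B := K + \sum_(k < N) u k / q ^+ k.
have uq0 k : 0 <= u k / q ^+ k by rewrite divr_ge0// exprn_ge0// ltW.
have B0 : 0 <= B by rewrite addr_ge0// sumr_ge0.
have uB n : u n <= B * q ^+ n.
  have [nN|Nn] := ltnP n N; last first.
    by rewrite (le_trans (uK n Nn))// ler_pM2r ?exprn_gt0// lerDl sumr_ge0.
  rewrite -ler_pdivrMr ?exprn_gt0//.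
  apply: (le_trans (y := \sum_(k < N) u k / q ^+ k)); last by rewrite lerDr.
  by rewrite (bigD1 (Ordinal nN))//= lerDl sumr_ge0.
apply: (le_lt_trans (nneseries_le_bound (B := B / (1 - q)) u0 _)); last exact: ltry.
move=> M; apply: le_trans (geometric_le_lim M B0 q0 _); last by rewrite ger0_norm ?ltW.
by apply: ler_sum => n _.
Qed.

Lemma nneseries_lty_eventually_lt (u : nat -> R) (e : R) : (forall n, 0 <= u n) -> 0 < e ->
  (\sum_(0 <= n <oo) (u n)%:E < +oo)%E -> exists N, forall n, (N <= n)%N -> u n < e.
Proof.
move=> u0 e0 /(nnseries_is_cvg u0)/cvg_series_cvg_0/cvgr0_norm_lt/(_ e e0) [N _ uN].
by exists N => n /uN; rewrite ger0_norm.
Qed.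

End nonnegative_series.

Section probability_lemmas.
Context (dsp : measure_display) (T : measurableType dsp) (R : realType).
Variable P : probability T R.

Lemma integral_lty_le_affine (f g : T -> \bar R) (k l : R) : 0 <= k -> 0 <= l ->
  measurable_fun setT f -> measurable_fun setT g ->
  (forall x, 0 <= f x)%E -> (forall x, 0 <= g x)%E ->
  (forall x, f x <= k%:E * g x + l%:E)%E ->
  (\int[P]_x g x < +oo -> \int[P]_x f x < +oo)%E.
Proof.
move=> k0 l0 mf mg f0 g0 fg gfin.
have mkg : measurable_fun setT (fun x => k%:E * g x)%E by exact: measurable_funeM.
have kg0 x : (0 <= k%:E * g x)%E by rewrite mule_ge0.
apply: (@le_lt_trans _ _ (\int[P]_x (k%:E * g x + l%:E))%E).
  apply: ge0_le_integral => //.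
  by apply: emeasurable_funD => //; exact: measurable_cst.
rewrite ge0_integralD//.
rewrite ge0_integralZl_EFin// integral_cst//.
apply: lte_add_pinfty; apply: lte_mul_pinfty => //.
by rewrite (le_lt_trans (probability_le1 _ _))// ltry.
Qed.

Lemma ae_exists_measure_gt0 (G : nat -> set T) : (forall N, measurable (G N)) ->
  {ae P, forall x, exists N, G N x} -> exists N, (0 < P (G N))%E.
Proof.
move=> mG aeG; apply: contrapT => /forallNP noG.
have G0 N : P (G N) = 0 by apply/eqP; rewrite eq_le measure_ge0 andbT leNgt; exact/negP/noG.
have aenG : {ae P, forall x N, ~ G N x}.
  apply: ae_foralln => N; exists (G N).
  by split; [exact: mG | exact: G0 | move=> x /= /contrapT].
have [A [mA A0 sA]] : {ae P, forall x, False}.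
  by apply: filterS2 aeG aenG => x [N GN] /(_ N).
have : (P setT <= P A)%E by apply: le_measure; rewrite ?inE// => x _; exact: sA.
by rewrite A0 probability_setT lee_fin ler10.
Qed.

End probability_lemmas.

Lemma logp_ge0 {R : realType} (v : R) : 0 <= logp v.
Proof. by rewrite /logp; case: ifPn => //; rewrite -ltNge => /ln_gt0/ltW. Qed.

Lemma measurable_logp {R : realType} : measurable_fun setT (@logp R).
Proof.
rewrite (_ : logp = (@ln R) \max (cst 0)).
  exact: measurable_maxr (@measurable_ln R) (measurable_cst _).
apply/funext => v; rewrite /logp /=; case: ifPn => h; first by rewrite max_r// ln_le0.
by rewrite max_l// ltW// ln_gt0// ltNge.
Qed.

Section level_count.
Variables (R : realType) (c b : R) (d : nat).
Hypotheses (c0 : 0 < c) (b0 : 0 < b) (d_gt0 : (0 < d)%N).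

Definition block_size (n : nat) : nat := (Num.truncn (c * n%:R ^+ (d - 1))).+1.

Lemma block_size_gt n : c * n%:R ^+ (d - 1) < (block_size n)%:R.
Proof. exact: truncnS_gt. Qed.

Lemma block_size_le n : (block_size n)%:R <= c * n%:R ^+ (d - 1) + 1.
Proof. by rewrite /block_size -addn1 natrD lerD2r truncn_le mulr_ge0// ltW. Qed.

Lemma expR_lt_logp (v : R) n : (expR (n%:R * b) < v) = (n%:R * b < logp v).
Proof.
have nb0 : 0 <= n%:R * b by rewrite mulr_ge0// ltW.
rewrite /logp; case: ifPn => v1; last first.
  by rewrite -ltNge in v1; rewrite -{1}(@lnK _ v) ?ltr_expR// posrE (lt_trans _ v1).
apply/idP/idP => h; last lra.
have := expR_ge1Dx (n%:R * b); lra.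
Qed.

Definition level_count (v : R) : \bar R :=
  \sum_(0 <= n <oo) ((block_size n)%:R * (expR (n%:R * b) < v)%R%:R)%:E.

Lemma level_count_ge0 v : (0 <= level_count v)%E.
Proof. by apply: nneseries_ge0 => n _ _; rewrite lee_fin mulr_ge0. Qed.

Let term v n : R := (block_size n)%:R * (expR (n%:R * b) < v)%R%:R.
Let cut v := Num.truncn (logp v / b).

Lemma level_countE v : level_count v = (\sum_(0 <= n < (cut v).+1) term v n)%:E.
Proof.
rewrite /level_count (@nneseries_split _ _ 0 (cut v).+1); last first.
  by move=> k _; rewrite lee_fin mulr_ge0.
rewrite add0n [X in (_ + X)%E]eseries0 ?adde0 ?sumEFin// => n cut_lt_n _.
suff -> : (expR (n%:R * b) < v) = false by rewrite mulr0.
rewrite expR_lt_logp; apply/negbTE; rewrite -leNgt -ler_pdivrMr//.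
by rewrite (le_trans (ltW (truncnS_gt _)))// ler_nat.
Qed.

Lemma level_count_le v :
  (level_count v <= ((2 * c + 1) / b ^+ d * logp v ^+ d + (c + 2))%:E)%E.
Proof.
rewrite level_countE lee_fin.
set y := logp v / b; have y0 : 0 <= y by rewrite divr_ge0 ?logp_ge0// ltW.
have cut_le : ((cut v)%:R : R) <= y by rewrite truncn_le.
apply: (le_trans (y := \sum_(0 <= n < (cut v).+1) (c * y ^+ (d - 1) + 1))).
  apply: ler_sum_nat => n /andP[_ n_le].
  apply: (le_trans (y := (block_size n)%:R)); first by rewrite ler_piMr// lern1 leq_b1.
  apply: (le_trans (block_size_le n)); rewrite lerD2r ler_pM2l// lerXn2r// ?nnegrE//.
  by apply: le_trans cut_le; rewrite ler_nat -ltnS.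
rewrite sumr_const_nat subn0 -[X in X <= _]mulr_natl.
apply: (le_trans (y := (y + 1) * (c * y ^+ (d - 1) + 1))).
  apply: ler_wpM2r; first by rewrite addr_ge0// mulr_ge0 ?exprn_ge0// ltW.
  by rewrite -natr1 lerD2r.
have -> : (2 * c + 1) / b ^+ d * logp v ^+ d = (2 * c + 1) * y ^+ d.
  by rewrite /y exprMn exprVn mulrAC mulrA.
have le_pred : c * y ^+ (d - 1) <= c * (1 + y ^+ d).
  by rewrite ler_pM2l// exprn_le_1D// leq_subr.
have le_y : y <= 1 + y ^+ d by rewrite -{1}[y]expr1 exprn_le_1D.
have yd : y ^+ d = y ^+ (d - 1) * y by rewrite -exprSr subn1 prednK.
move: le_pred le_y; rewrite yd; set P := y ^+ (d - 1).
have -> : (y + 1) * (c * P + 1) = c * (P * y) + c * P + y + 1 by ring.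
lra.
Qed.

Lemma logp_le_level_count v : ((logp v ^+ d)%:E <=
  ((2 * b) ^+ d * d%:R / c)%:E * level_count v + ((4 * b) ^+ d)%:E)%E.
Proof.
rewrite level_countE -EFinM -EFinD lee_fin.
set s := \sum_(0 <= n < _) term v n; set Y := cut v.
set y := logp v / b; have y0 : 0 <= y by rewrite divr_ge0 ?logp_ge0// ltW.
set S := (\sum_(0 <= n < Y) n ^ (d - 1))%N.
have S_le : S%:R <= s / c.
  rewrite ler_pdivlMr// mulrC /s big_nat_recr//= natr_sum mulr_sumr.
  apply: (le_trans (y := \sum_(0 <= n < Y) term v n)); last by rewrite lerDl mulr_ge0.
  apply: ler_sum_nat => n /andP[_ nY]; rewrite /term.
  suff -> : (expR (n%:R * b) < v) = true by rewrite mulr1 natrX; exact/ltW/block_size_gt.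
  move: nY; rewrite expR_lt_logp truncn_gt_nat -ltr_pdivlMr// -/y => h.
  by apply: lt_le_trans h; rewrite ltr_nat.
have YS : (Y.-1 ^ d <= d * S)%N.
  by rewrite /S subn1; case: (Y) => [|M]; [rewrite exp0n | exact: expn_le_sum_expn].
have y_le : y <= Y.-1%:R + 2.
  apply/ltW/(lt_le_trans (truncnS_gt y)); rewrite -[2]/(2%:R) -natrD ler_nat.
  by rewrite addn2 ltnS leqSpred.
have -> : logp v ^+ d = b ^+ d * y ^+ d.
  by rewrite /y exprMn exprVn mulrCA mulfV ?mulr1// expf_neq0// gt_eqF.
have -> : (2 * b) ^+ d * d%:R / c * s + (4 * b) ^+ d
    = b ^+ d * (2 ^+ d * (d%:R * (s / c) + 2 ^+ d)).
  have -> : 4 * b = 2 * b * 2 by ring.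
  by rewrite !exprMn; field; exact: lt0r_neq0.
rewrite ler_pM2l ?exprn_gt0//.
apply: (le_trans (exprn_le_2XD d (ler0n _ _) _ y0 y_le)) => //.
rewrite ler_wpM2l ?exprn_ge0// lerD2r (le_trans _ (ler_wpM2l _ S_le))//.
by rewrite -natrX -natrM ler_nat.
Qed.

End level_count.

Section level_count_integral.
Context (dsp : measure_display) (T : measurableType dsp) (R : realType).
Variables (Q : probability T R) (V : T -> R) (c b : R) (d : nat).
Hypotheses (mV : measurable_fun setT V) (c0 : 0 < c) (b0 : 0 < b) (d_gt0 : (0 < d)%N).

Definition exceed (n : nat) := V @^-1` `]expR (n%:R * b), +oo[.

Lemma measurable_exceed n : measurable (exceed n).
Proof. by rewrite -[exceed n]setTI; apply: mV => //; exact: measurable_itv. Qed.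

Let f n x : \bar R := ((block_size c d n)%:R * \1_(exceed n) x)%:E.

Let mf n : measurable_fun setT (f n).
Proof.
apply/measurable_EFinP/measurable_funM; first exact: measurable_cst.
exact/measurable_indic/measurable_exceed.
Qed.

Let f0 n x : (0 <= f n x)%E.
Proof. by rewrite lee_fin mulr_ge0. Qed.

Let level_count_series x : level_count c b d (V x) = (\sum_(0 <= n <oo) f n x)%E.
Proof.
apply: eq_eseriesr => n _; rewrite /f indicE; congr ((_ * (nat_of_bool _)%:R)%:E).
by apply/idP/idP => [h|/set_mem]; [apply/mem_set | ]; rewrite /exceed /preimage /= in_itv /= andbT.
Qed.

Lemma measurable_level_count : measurable_fun setT (fun x => level_count c b d (V x)).
Proof.
by rewrite (funext level_count_series); apply: (ge0_emeasurable_sum (P := xpredT)).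
Qed.

Lemma integral_level_count : (\int[Q]_x level_count c b d (V x)
  = \sum_(0 <= n <oo) ((block_size c d n)%:R%:E * Q (exceed n)))%E.
Proof.
under eq_integral do rewrite level_count_series.
rewrite integral_nneseries//.
apply: eq_eseriesr => n _; rewrite /f; under eq_integral do rewrite EFinM.
rewrite ge0_integralZl_EFin//; last exact/measurable_EFinP/measurable_indic/measurable_exceed.
by rewrite integral_indic ?setIT//; exact: measurable_exceed.
Qed.

Lemma integral_logp_lty_iff : (\int[Q]_x ((logp (V x)) ^+ d)%:E < +oo)%E <->
  (\sum_(0 <= n <oo) ((block_size c d n)%:R%:E * Q (exceed n)) < +oo)%E.
Proof.
have mL : measurable_fun setT (fun x => (logp (V x) ^+ d)%:E).
  apply/measurable_EFinP/(measurableT_comp (exprn_measurable _)).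
  exact: measurableT_comp measurable_logp mV.
have L0 x : (0 <= (logp (V x) ^+ d)%:E)%E by rewrite lee_fin exprn_ge0// logp_ge0.
have mS := measurable_level_count; have S0 x := level_count_ge0 c b d (V x).
have b_ge0 := ltW b0; have c_ge0 := ltW c0.
rewrite -integral_level_count; split.
- apply: (integral_lty_le_affine (k := (2 * c + 1) / b ^+ d) (l := c + 2)) => //.
  + by rewrite divr_ge0 ?exprn_ge0 ?addr_ge0 ?mulr_ge0.
  + by rewrite addr_ge0.
  + by move=> x; exact: level_count_le.
- apply: (integral_lty_le_affine (k := (2 * b) ^+ d * d%:R / c) (l := (4 * b) ^+ d)) => //.
  + by rewrite divr_ge0// mulr_ge0// exprn_ge0// mulr_ge0.
  + by rewrite exprn_ge0// mulr_ge0.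
  + by move=> x; exact: logp_le_level_count.
Qed.

End level_count_integral.

Section block_series.
Context (dsp : measure_display) (T : measurableType dsp) (R : realType).
Variables (Q : probability T R) (d : nat) (c a : R) (V : T -> R) (W : nat -> nat -> T -> R).
Hypotheses (d_gt0 : (0 < d)%N) (c0 : 0 < c) (a0 : 0 < a) (a1 : a < 1).
Hypotheses (mV : measurable_fun setT V) (mW : forall i n, measurable_fun setT (W i n)).
Hypothesis W_distr : forall i n, identically_distributed Q (W i n) V.
Hypothesis W_ge0 : forall i n, {ae Q, forall x, 0 <= W i n x}.
Hypothesis W_indep : mutually_independent Q (fam V W).

Let m := block_size c d.
Let b := - ln a.

Let b0 : 0 < b. Proof. by rewrite oppr_gt0 ln_lt0// a0 a1. Qed.

Let exprn_a n : a ^+ n = expR (- (n%:R * b)).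
Proof. by rewrite -mulrN expRM_natl opprK lnK// posrE. Qed.

Let block_term x n := a ^+ n * \sum_(0 <= i < m n) W i n x.

Lemma block_series_lty x e : e < b -> (forall i n, 0 <= W i n x) ->
  (exists N, forall n, (N <= n)%N -> forall i, (i < m n)%N -> W i n x <= expR (n%:R * e)) ->
  (\sum_(0 <= n <oo) (block_term x n)%:E < +oo)%E.
Proof.
move=> eb W0 [N WN]; set g := (b - e) / 2; have g0 : 0 < g by rewrite divr_gt0// subr_gt0.
set K := c * ((d - 1)`!%:R / g ^+ (d - 1)) + 1.
have K0 : 0 <= K by rewrite addr_ge0// mulr_ge0 ?divr_ge0 ?exprn_ge0// ltW.
apply: (nneseries_lty_eventually_geometric (q := expR (- g)) (K := K) (N := N)) => //.
- by move=> n; rewrite mulr_ge0 ?exprn_ge0 ?sumr_ge0// ltW.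
- exact: expR_gt0.
- by rewrite expR_lt1 oppr_lt0.
move=> n Nn.
have m_le : (m n)%:R <= K * expR (n%:R * g).
  have : 1 <= expR (n%:R * g) by rewrite -expR0 ler_expR mulr_ge0// ltW.
  have := natrX_le_expR (d - 1) g0 n; have := block_size_le d c0 n.
  rewrite -/(m n) mulrDl mul1r => hm hX e1.
  by apply: (le_trans hm); apply: lerD => //; rewrite -mulrA ler_pM2l.
have sum_le : \sum_(0 <= i < m n) W i n x <= (m n)%:R * expR (n%:R * e).
  apply: (le_trans (y := \sum_(0 <= i < m n) expR (n%:R * e))).
    by apply: ler_sum_nat => i /andP[_ im]; exact: WN.
  by rewrite sumr_const_nat subn0 -[X in X <= _]mulr_natl.
rewrite /block_term.
apply: (le_trans (y := a ^+ n * (K * expR (n%:R * g) * expR (n%:R * e)))).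
  by rewrite ler_pM2l ?exprn_gt0// (le_trans sum_le)// ler_pM2r ?expR_gt0.
have -> : a ^+ n * (K * expR (n%:R * g) * expR (n%:R * e)) = K * expR (n%:R * - g).
  by rewrite exprn_a mulrCA -mulrA -!expRD; congr (_ * expR _); rewrite /g; field.
by rewrite expRM_natl.
Qed.

Lemma block_series_lty_eventually_le x : (forall i n, 0 <= W i n x) ->
  (\sum_(0 <= n <oo) (block_term x n)%:E < +oo)%E ->
  exists N, forall n, (N <= n)%N -> forall i, (i < m n)%N -> W i n x <= expR (n%:R * b).
Proof.
move=> W0 fin.
have term0 n : 0 <= block_term x n by rewrite mulr_ge0 ?exprn_ge0 ?sumr_ge0// ltW.
have [N termN] := nneseries_lty_eventually_lt term0 ltr01 fin.
exists N => n /termN term_lt1 i im.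
rewrite -(ler_pM2l (exprn_gt0 n a0)) exprn_a -expRD addNr expR0 ltW// (le_lt_trans _ term_lt1)//.
rewrite -exprn_a ler_pM2l ?exprn_gt0// big_mkord.
by rewrite (bigD1 (Ordinal im))//= lerDl sumr_ge0.
Qed.

Let mW_preimage i n (B : set R) : measurable B -> measurable (W i n @^-1` B).
Proof. by move=> mB; rewrite -[_ @^-1` _]setTI; exact: mW. Qed.

Let ae_W_ge0 : {ae Q, forall x i n, 0 <= W i n x}.
Proof. by apply: ae_foralln => i; apply: ae_foralln => n; exact: W_ge0. Qed.

Let Q_W_exceed i n e : Q (W i n @^-1` `]expR (n%:R * e), +oo[) = Q (exceed V e n).
Proof. exact: W_distr (measurable_itv _). Qed.

Lemma ae_block_series_lty : (\int[Q]_x ((logp (V x)) ^+ d)%:E < +oo)%E ->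
  {ae Q, forall x, (\sum_(0 <= n <oo) (block_term x n)%:E < +oo)%E}.
Proof.
set e := b / 2; have e0 : 0 < e by rewrite divr_gt0.
move=> /(integral_logp_lty_iff Q mV c0 e0 d_gt0) fin.
pose E n i := W i n @^-1` `]expR (n%:R * e), +oo[.
pose F n := \big[setU/set0]_(i < m n) E n i.
have mWe n i : measurable (E n i) by exact: mW_preimage (measurable_itv _).
have mF n : measurable (F n) by apply: bigsetU_measurable => i _.
have QF n : (Q (F n) <= (m n)%:R%:E * Q (exceed V e n))%E.
  have := @content_subadditive _ _ _ Q _ _ _ (fun i _ => mWe n i) (mF n) (@subset_refl _ _).
  move/le_trans; apply.
  rewrite (eq_bigr (fun=> Q (exceed V e n))) => [|i _]; last exact: Q_W_exceed.
  by rewrite sumr_const card_ord mule_natl.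
have /(lim_sup_set_cvg0 mF) limsupF0 : (\sum_(0 <= n <oo) Q (F n) < +oo)%E.
  apply: le_lt_trans fin; apply: lee_nneseries => [n _ _|n _]; [exact: measure_ge0 | exact: QF].
have ae_notF : {ae Q, forall x, ~ lim_sup_set F x}.
  exists (lim_sup_set F); split => // [|x /= /contrapT//].
  by apply: bigcap_measurableType => k _; apply: bigcup_measurable => j _.
apply: filterS2 ae_W_ge0 ae_notF => x W0 notF; apply: (block_series_lty (e := e)) => //.
  by rewrite /e ltr_pdivrMr// ltr_pMr// ltr1n.
have [N notFN] : exists N, ~ (\bigcup_(n in [set n | (N <= n)%N]) F n) x.
  by apply/existsNP => allF; apply: notF => N _; exact: allF.
exists N => n Nn i im; rewrite leNgt; apply/negP => We.
apply: notFN; exists n => //; rewrite /F -bigcup_mkord; exists i => //.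
by rewrite /E /preimage /= in_itv /= We.
Qed.

Let below N := \bigcap_(n in [set n | (N <= n)%N])
  \bigcap_(i in [set i | (i < m n)%N]) (W i n @^-1` `]-oo, expR (n%:R * b)]).

Let measurable_below N : measurable (below N).
Proof.
apply: bigcap_measurableType => n _; apply: bigcap_measurableType => i _.
exact: mW_preimage (measurable_itv _).
Qed.

Let p n := fine (Q (exceed V b n)).

Let Q_exceed n : Q (exceed V b n) = (p n)%:E.
Proof. by rewrite fineK// fin_num_measure//; exact: measurable_exceed. Qed.

Let p01 n : 0 <= p n <= 1.
Proof. by rewrite -!lee_fin -Q_exceed measure_ge0 probability_le1//; exact: measurable_exceed. Qed.

Let Q_W_le i n : Q (W i n @^-1` `]-oo, expR (n%:R * b)]) = (1 - p n)%:E.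
Proof.
rewrite -setCitvr preimage_setC probability_setC; last exact: mW_preimage (measurable_itv _).
by rewrite Q_W_exceed Q_exceed.
Qed.

Lemma measure_below_le_prod N M : (Q (below N) <= (\prod_(N <= n < M) (1 - p n) ^+ m n)%:E)%E.
Proof.
pose s := [seq Some (i, n) | n <- index_iota N M, i <- index_iota 0 (m n)].
pose B (j : option (nat * nat)) : set R :=
  if j is Some (i, n) then `]-oo, expR (n%:R * b)] else setT.
have mB j : measurable (B j) by case: j => [[i n]|] //=; exact: measurable_itv.
have s_uniq : uniq s.
  apply: allpairs_uniq_dep; [exact: iota_uniq | by move=> n _; exact: iota_uniq |].
  by move=> [n1 i1] [n2 i2] _ _ /= [-> ->].
have below_sub : below N `<=` \bigcap_(j in [set` s]) (fam V W j @^-1` B j).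
  move=> x belowx j /= /allpairsPdep [n [i [+ + ->]]] /=.
  by rewrite !mem_index_iota => /andP[Nn _] /andP[_ im]; exact: belowx.
apply: (@le_trans _ _ (Q (\bigcap_(j in [set` s]) fam V W j @^-1` B j))).
  apply: le_measure below_sub; rewrite inE//.
  rewrite bigcap_seq; apply: bigsetI_measurable => -[[i n]|] _ /=; first exact: mW_preimage.
  by rewrite -[_ @^-1` _]setTI; apply: mV.
rewrite (W_indep s_uniq mB).
rewrite (eq_bigr (fun j => (if j is Some (i, n) then 1 - p n else 1)%:E)).
  rewrite prodEFin lee_fin /s big_allpairs_dep/= (eq_bigr (fun n => (1 - p n) ^+ m n))//.
  by move=> n _; rewrite prodr_const_nat subn0.
by move=> -[[i n]|] _ /=; [exact: Q_W_le | rewrite preimage_setT probability_setT].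
Qed.

Lemma integral_logp_lty_of_ae_block_series :
  {ae Q, forall x, (\sum_(0 <= n <oo) (block_term x n)%:E < +oo)%E} ->
  (\int[Q]_x ((logp (V x)) ^+ d)%:E < +oo)%E.
Proof.
move=> fin.
have ae_below : {ae Q, forall x, exists N, below N x}.
  apply: filterS2 ae_W_ge0 fin => x W0 /(block_series_lty_eventually_le W0) [N WN].
  by exists N => n /= Nn i /= im; rewrite /preimage /= in_itv /= WN.
have [N below_gt0] := ae_exists_measure_gt0 measurable_below ae_below.
have Q_below : Q (below N) = (fine (Q (below N)))%:E by rewrite fineK// fin_num_measure.
have sum_le M : \sum_(N <= n < M) (m n)%:R * p n <= - ln (fine (Q (below N))).
  apply: sum_le_ln_prod => //; first by rewrite -lte_fin -Q_below.
  by rewrite -lee_fin -Q_below; exact: measure_below_le_prod.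
apply/(integral_logp_lty_iff Q mV c0 b0 d_gt0).
have mp0 n : 0 <= (m n)%:R * p n by rewrite mulr_ge0//; case/andP: (p01 n).
under eq_eseriesr do rewrite Q_exceed -EFinM.
rewrite (nneseries_split 0 N) => [|n _]; last by rewrite lee_fin.
rewrite add0n sumEFin; apply: lte_add_pinfty; first exact: ltry.
exact: le_lt_trans (nneseries_le_bound mp0 sum_le) (ltry _).
Qed.

End block_series.

Theorem lemma2p2 (dsp : measure_display) (T : measurableType dsp) (R : realType)
  (Q : probability T R) (d : nat) (c a : R)
  (V : T -> R) (W : nat -> nat -> T -> R) :
  (1 <= d)%N -> 0 < c -> 0 < a -> a < 1 ->
  measurable_fun setT V -> (forall i n, measurable_fun setT (W i n)) ->
  mutually_independent Q (fam V W) ->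
  (forall i n, identically_distributed Q (W i n) V) ->
  {ae Q, forall x, 0 <= V x} ->
  (forall i n, {ae Q, forall x, 0 <= W i n x}) ->
  ((\int[Q]_x ((logp (V x)) ^+ d)%:E < +oo)%E <->
   {ae Q, forall x,
     (\sum_(0 <= n <oo)
        (a ^+ n * \sum_(0 <= i < (Num.truncn (c * n%:R ^+ (d - 1))).+1) W i n x)%:E
      < +oo)%E}).
Proof.
move=> d_gt0 c0 a0 a1 mV mW W_indep W_distr _ W_ge0; split.
- exact: (ae_block_series_lty d_gt0 c0 a0 a1 mV mW W_distr W_ge0).
- exact: (integral_logp_lty_of_ae_block_series d_gt0 c0 a0 a1 mV mW W_distr W_ge0 W_indep).
Qed.
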